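(* Let $Y$ and $Z$ be sofic shifts and let $(G,L_G)$ and $(H,L_H)$ be right-resolving labeled graphs presenting $Y$ and $Z$, respectively. Assume that there are conjugacies $\psi : Y \to Z$ and $\phi : X_G \to X_H$ such that $L_H\circ\phi=\psi\circ L_G$. Then there is a conjugacy $\phi'' : X_{G''} \to X_{H''}$ such that $L_{H''}\circ\phi''=\psi\circ L_{G''}$.
   Context: A labeled graph $(H,L_H)$: finite directed graph (vertices $V_H$, edges $E_H$, source/terminal maps $s_H,t_H$) without sinks or sources, labeling $L_H:E_H\to A$, edge shift $X_H$; $L_H$ applied coordinatewise; it presents $L_H(X_H)$. Right-resolving: distinct edges with the same source have distinct labels. Conjugacy: shift-commuting homeomorphism. Subset construction $(H'',L_{H''})$: vertices are non-empty subsets of $V_H$; for vertices $F,F'$ and a symbol $a$ there is an edge from $F$ to $F'$ labeled $a$ when $F\subseteq\{s_H(e): L_H(e)=a\}$ and $F'=\{t_H(e): s_H(e)\in F, L_H(e)=a\}$; the graph is then trimmed by repeatedly removing sinks and sources. $(G'',L_{G''})$ is defined likewise from $(G,L_G)$. *)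

From mathcomp Require Import all_boot all_order all_algebra.
Set Implicit Arguments. Unset Strict Implicit. Unset Printing Implicit Defensive.
Import GRing.Theory Num.Theory.
Local Open Scope ring_scope.

Definition shift (T : Type) (x : int -> T) : int -> T := fun i => x (i + 1).

Definition agree_on (T : Type) (m : nat) (x y : int -> T) : Prop :=
  forall i : int, (absz i <= m)%N -> x i = y i.

(* continuity of f restricted to X, for the product topology of discrete
   alphabets (cylinder sets on central windows form a basis) *)
Definition cont_on (T U : Type) (X : (int -> T) -> Prop)
  (f : (int -> T) -> (int -> U)) : Prop :=
  forall x, X x -> forall n : nat, exists m : nat,
    forall y, X y -> agree_on m x y -> agree_on n (f x) (f y).

Definition conjugacy (T U : Type) (X : (int -> T) -> Prop) (Y : (int -> U) -> Prop)
  (f : (int -> T) -> (int -> U)) : Prop :=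
  [/\ (forall x, X x -> Y (f x)),
      (forall x, X x -> f (shift x) = shift (f x)),
      cont_on X f &
      exists g : (int -> U) -> (int -> T),
        [/\ (forall y, Y y -> X (g y)),
            (forall x, X x -> g (f x) = x),
            (forall y, Y y -> f (g y) = y) &
            cont_on Y g]].

Definition edge_shift (V E : finType) (s t : E -> V) (x : int -> E) : Prop :=
  forall i : int, t (x i) = s (x (i + 1)).

Definition no_sinks_sources (V E : finType) (s t : E -> V) : Prop :=
  forall v : V, (exists e, s e = v) /\ (exists e, t e = v).

Definition right_resolving (V E A : finType) (s : E -> V) (L : E -> A) : Prop :=
  forall e e', s e = s e' -> L e = L e' -> e = e'.

Definition lab (E A : Type) (L : E -> A) (x : int -> E) : int -> A :=
  fun i => L (x i).

Definition presents (V E A : finType) (s t : E -> V) (L : E -> A)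
  (Y : (int -> A) -> Prop) : Prop :=
  forall y, Y y <-> exists x, edge_shift s t x /\ y = lab L x.

Section SubsetConstruction.
Variables (V E A : finType) (s t : E -> V) (L : E -> A).

Definition sc_vert : {set {set V}} := [set F : {set V} | F != set0].

(* an edge is a pair (F, a): source F, label a, target sc_tgt (F, a) *)
Definition sc_src (p : {set V} * A) : {set V} := p.1.
Definition sc_tgt (p : {set V} * A) : {set V} :=
  [set t e | e : E & (s e \in p.1) && (L e == p.2)].
Definition sc_lab (p : {set V} * A) : A := p.2.

Definition sc_edge (p : {set V} * A) : bool :=
  [&& sc_src p \in sc_vert, sc_tgt p \in sc_vert &
      sc_src p \subset [set s e | e : E & L e == p.2]].

(* one round of removing all sinks and sources *)
Definition sc_trim_step (W : {set {set V}}) : {set {set V}} :=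
  [set F in W | [exists p, [&& sc_edge p, sc_src p == F & sc_tgt p \in W]] &&
                [exists p, [&& sc_edge p, sc_tgt p == F & sc_src p \in W]]].

(* repeated removal; stabilises after at most #|{set V}| rounds *)
Definition sc_trim_vert : {set {set V}} :=
  iter #|{: {set V}}| sc_trim_step sc_vert.

Definition sc_trim_edge (p : {set V} * A) : bool :=
  [&& sc_edge p, sc_src p \in sc_trim_vert & sc_tgt p \in sc_trim_vert].

(* edge shift X_{G''} of the trimmed subset-construction graph *)
Definition sc_shift (x : int -> {set V} * A) : Prop :=
  (forall i, sc_trim_edge (x i)) /\ (forall i : int, sc_tgt (x i) = sc_src (x (i + 1))).

End SubsetConstruction.

From mathcomp Require Import all_boot all_algebra zify boolp.
Set Implicit Arguments. Unset Strict Implicit. Unset Printing Implicit Defensive.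
Import GRing.Theory.
Local Open Scope ring_scope.

(* Call a path x of G a lift of a point p of X_{G''} if x carries the labels
   of p and x_i starts in the vertex set of p_i.  Since p survives trimming,
   every vertex of the vertex set of p_k is the source of x_k for some lift x,
   and since G is right-resolving, two lifts starting at the same vertex agree
   from there on.  Put
     phi''(p)_j = ({ s_H (phi x)_j | x lift of p }, psi (L p)_j).
   Right-resolvingness of H makes this a point of X_{H''} (the images of the
   lifts are chained edge by edge), phi'' commutes with the shift because phi
   and psi do, and phi'' is continuous because phi is uniformly continuous on
   the compact space X_G and a lift of p can be followed by a lift of any
   nearby point.  The same construction for the inverses of phi and psi
   inverts phi'': every lift of phi''(p) is a limit of images of lifts of p,
   and phi^-1 is continuous. *)

Section Agreement.
Variables (T : Type) (m : nat) (x y z : int -> T).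

Lemma agree_onW m' : (m' <= m)%N -> agree_on m x y -> agree_on m' x y.
Proof. by move=> le_m'm xy i /leq_trans/(_ le_m'm)/xy. Qed.

Lemma agree_onC : agree_on m x y -> agree_on m y x.
Proof. by move=> xy i /xy. Qed.

Lemma agree_on_trans : agree_on m x y -> agree_on m y z -> agree_on m x z.
Proof. by move=> xy yz i im; rewrite xy ?yz. Qed.

End Agreement.

Definition frequently (P : nat -> Prop) : Prop :=
  forall M, exists2 m, (M <= m)%N & P m.

Lemma frequently_pigeonhole (K : finType) (P : nat -> Prop) (key : nat -> K) :
  frequently P -> exists2 m0, P m0 & frequently (fun m => P m /\ key m = key m0).
Proof.
move=> freqP.
suff [a freq_a] : exists a, frequently (fun m => P m /\ key m = a).
  by have [m0 _ [Pm0 key_m0]] := freq_a 0%N; exists m0; rewrite ?key_m0.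
apply: contrapT => no_freq.
have /fin_all_exists [M HM] :
    forall a, exists M, forall m, (M <= m)%N -> P m -> key m != a.
  move=> a; apply: contrapT => no_bound; apply: no_freq; exists a => M.
  apply: contrapT => no_m; apply: no_bound; exists M => m le_Mm Pm.
  by apply/eqP => key_m; apply: no_m; exists m.
have [m le_m Pm] := freqP (\max_a M a).
by have /eqP := HM (key m) m (leq_trans (leq_bigmax _) le_m) Pm.
Qed.

(* König's lemma for the compact space E^Z: refine, window by window, a
   pattern that is matched by infinitely many terms. *)
Lemma cluster_point (E : finType) (xs : nat -> int -> E) :
  exists x, forall k, frequently (fun m => agree_on k x (xs m)).
Proof.
pose near k c := frequently (fun m => agree_on k c (xs m)).
have near_agree k c c' : agree_on k c' c -> near k c -> near k c'.
  move=> c'c near_c M; have [m le_m c_m] := near_c M.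
  by exists m; last exact: agree_on_trans c'c c_m.
have freqT : frequently (fun=> True) by move=> M; exists M.
have [m0 _ freq0] := frequently_pigeonhole (fun m => xs m 0) freqT.
have near0 : near 0%N (xs m0).
  move=> M; have [m le_m [_ eq0]] := freq0 M; exists m => // i.
  by rewrite leqn0 absz_eq0 => /eqP ->.
have near_step k c : near k c -> exists c', near k.+1 c' /\ agree_on k c' c.
  move=> near_c.
  have [m1 c_m1 freq1] := frequently_pigeonhole
    (fun m => (xs m k.+1%:Z, xs m (- k.+1%:Z))) near_c.
  exists (xs m1); split; last exact: agree_onC.
  move=> M; have [m le_m [c_m [eq1 eq2]]] := freq1 M; exists m => // i le_ik.
  have [le_i|[->|->]] : (absz i <= k)%N \/ i = k.+1%:Z \/ i = - k.+1%:Z by lia.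
  - by rewrite -c_m1 ?c_m.
  - by rewrite eq1.
  - by rewrite eq2.
have /choice [next nextP] : forall kc : nat * (int -> E), exists c',
    near kc.1 kc.2 -> near kc.1.+1 c' /\ agree_on kc.1 c' kc.2.
  case=> k c; have [/near_step [c' ?]|not_near] := pselect (near k c).
    by exists c'.
  by exists c => /not_near.
pose fix chain k := if k is k'.+1 then next (k', chain k') else xs m0.
have near_chain k : near k (chain k).
  by elim: k => //= k IH; case: (nextP (k, chain k) IH).
have chain_agree k d : agree_on k (chain (k + d)%N) (chain k).
  elim: d => [|d IH]; first by rewrite addn0.
  rewrite addnS; apply: agree_on_trans IH => /=.
  have [_ /agree_onW next_agree] := nextP (_, _) (near_chain (k + d)%N).
  exact/next_agree/leq_addr.
exists (fun i => chain (absz i) i) => k; apply: near_agree (near_chain k) => i le_ik.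
by rewrite -(subnKC le_ik) (chain_agree (absz i)).
Qed.

Lemma edge_shift_cluster (V E : finType) (s t : E -> V) (xs : nat -> int -> E) x :
  (forall m, edge_shift s t (xs m)) ->
  (forall k, frequently (fun m => agree_on k x (xs m))) -> edge_shift s t x.
Proof.
move=> Exs near_x i; have [m _ x_m] := near_x (absz i + absz (i + 1)%R)%N 0%N.
by rewrite !x_m ?Exs //; lia.
Qed.

Lemma edge_shift_uniform_cont (V E : finType) (s t : E -> V) (U : Type)
    (f : (int -> E) -> int -> U) :
  cont_on (edge_shift s t) f -> forall n, exists m, forall x y,
    edge_shift s t x -> edge_shift s t y -> agree_on m x y -> agree_on n (f x) (f y).
Proof.
move=> f_cont n; apply: contrapT => not_unif.
have /choice [xy xyP] : forall m, exists xy : (int -> E) * (int -> E),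
    [/\ edge_shift s t xy.1, edge_shift s t xy.2, agree_on m xy.1 xy.2
      & ~ agree_on n (f xy.1) (f xy.2)].
  move=> m; apply: contrapT => no_xy; apply: not_unif; exists m => x y Ex Ey xy.
  by apply: contrapT => fxy; apply: no_xy; exists (x, y).
have [x near_x] := cluster_point (fun m => (xy m).1).
have Ex : edge_shift s t x by apply: edge_shift_cluster near_x => m; case: (xyP m).
have [m0 fx_m0] := f_cont x Ex n.
have [m le_m x_m] := near_x m0 m0.
have [Ex1 Ex2 xy_m] := xyP m; apply => i le_in.
rewrite -(fx_m0 _ Ex1 x_m i le_in) (fx_m0 _ Ex2 _ i le_in) //.
by apply: agree_on_trans x_m (agree_onW le_m xy_m).
Qed.

Lemma exists_ray (V E : Type) (src tgt : E -> V)
    (Q : nat -> V -> Prop) (R : nat -> E -> Prop) v :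
  (forall n u, Q n u -> exists e, [/\ R n e, src e = u & Q n.+1 (tgt e)]) ->
  Q 0%N v -> exists r : nat -> E,
    [/\ forall n, R n (r n), src (r 0%N) = v & forall n, tgt (r n) = src (r n.+1)].
Proof.
move=> step Qv; have [e0 _] := step _ _ Qv.
have /choice [next nextP] : forall nu : nat * V, exists e,
    Q nu.1 nu.2 -> [/\ R nu.1 e, src e = nu.2 & Q nu.1.+1 (tgt e)].
  case=> n u; have [/step [e ?]|not_Q] := pselect (Q n u); first by exists e.
  by exists e0 => /not_Q.
pose fix w n := if n is n'.+1 then tgt (next (n', w n')) else v.
have Qw n : Q n (w n) by elim: n => //= n IH; case: (nextP (n, w n) IH).
exists (fun n => next (n, w n)); split=> [n|//|n].
- by case: (nextP (n, w n) (Qw n)).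
- by case: (nextP (0%N, v) Qv).
- by case: (nextP (n.+1, w n.+1) (Qw n.+1)).
Qed.

Lemma edge_shift_through (V E : finType) (s t : E -> V)
    (P : int -> V -> Prop) (R : int -> E -> Prop) k u :
  (forall i v, P i v -> exists e, [/\ R i e, s e = v & P (i + 1) (t e)]) ->
  (forall i v, P (i + 1) v -> exists e, [/\ R i e, t e = v & P i (s e)]) ->
  P k u -> exists x, [/\ edge_shift s t x, forall i, R i (x i) & s (x k) = u].
Proof.
move=> fwd bwd Pu.
have [||fr [Rfr fr0 frS]] :=
  @exists_ray _ _ s t (fun n => P (k + n%:Z)) (fun n => R (k + n%:Z)) u _ _.
- move=> n v /fwd[e [Re se Pte]]; exists e; split=> //.
  by rewrite (_ : k + n.+1%:Z = k + n%:Z + 1) //; lia.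
- by rewrite addr0.
have [||br [Rbr br0 brS]] :=
  @exists_ray _ _ t s (fun n => P (k - n%:Z)) (fun n => R (k - n.+1%:Z)) u _ _.
- move=> n v Pv; have [|e ?] := bwd (k - n.+1%:Z) v; last by exists e.
  by rewrite (_ : k - n.+1%:Z + 1 = k - n%:Z) //; lia.
- by rewrite subr0.
(* [Negz n] is [- n.+1], so the positions left of [k] are read off [br]. *)
exists (fun i => match i - k with Posz n => fr n | Negz n => br n end); split.
- move=> i; rewrite (_ : i + 1 - k = (i - k) + 1); last by rewrite addrAC.
  case: (i - k) => [n|[|n]].
  + by rewrite (_ : Posz n + 1 = Posz n.+1) //; lia.
  + by rewrite (_ : Negz 0 + 1 = Posz 0) //= br0 fr0.
  + by rewrite (_ : Negz n.+1 + 1 = Negz n) //; lia.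
- move=> i; case ik: (i - k) => [n|n].
  + by rewrite (_ : i = k + n%:Z); [exact: Rfr | lia].
  + by rewrite (_ : i = k - n.+1%:Z); [exact: Rbr | lia].
- by rewrite subrr.
Qed.

Section SubsetConstruction.
Variables (V E A : finType) (s t : E -> V) (L : E -> A).

Lemma sc_shift_of_chain (q : int -> {set V} * A) :
  (forall i, sc_edge s t L (q i)) ->
  (forall i, sc_tgt s t L (q i) = sc_src (q (i + 1))) -> sc_shift s t L q.
Proof.
move=> q_edge q_chain.
have q_trim k i : sc_src (q i) \in iter k (sc_trim_step s t L) (sc_vert V).
  elim: k i => [|k IH] i /=; first by case/and3P: (q_edge i).
  rewrite /sc_trim_step inE IH /=; apply/andP; split; apply/existsP.
    by exists (q i); rewrite q_edge eqxx q_chain IH.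
  by exists (q (i - 1)); rewrite q_edge q_chain subrK eqxx IH.
split=> // i; rewrite /sc_trim_edge q_edge q_trim.
by rewrite q_chain q_trim.
Qed.

Definition sc_lift (p : int -> {set V} * A) (x : int -> E) : Prop :=
  [/\ edge_shift s t x, lab L x = lab (@sc_lab V A) p & forall i, s (x i) \in (p i).1].

Lemma sc_lift_lab p x i : sc_lift p x -> L (x i) = (p i).2.
Proof. by case=> _ /(congr1 (fun y => y i)). Qed.

Lemma sc_lift_transl p x c :
  sc_lift p x -> sc_lift (fun i => p (i + c)) (fun i => x (i + c)).
Proof.
case=> Ex lab_x src_x; split=> [i||i] //; first by rewrite Ex addrAC.
by apply/funext => i; exact: (congr1 (fun y => y (i + c)) lab_x).
Qed.

Lemma sc_lift_unshift p x : sc_lift (shift p) x -> sc_lift p (fun i => x (i - 1)).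
Proof.
move=> /(sc_lift_transl (-1)); congr sc_lift.
by apply/funext => i; rewrite /shift subrK.
Qed.

Lemma sc_lift_through p k u : sc_shift s t L p -> u \in (p k).1 ->
  exists2 x, sc_lift p x & s (x k) = u.
Proof.
case=> p_edge p_chain pku.
have p_next i : (p (i + 1)).1 = sc_tgt s t L (p i) by exact: esym (p_chain i).
have [||x [Ex Rx <-]] := @edge_shift_through _ _ s t (fun i v => v \in (p i).1)
  (fun i e => L e = (p i).2 /\ s e \in (p i).1) k u _ _ pku.
- move=> i v piv.
  have /and3P[_ _ /subsetP/(_ v piv)/imsetP[e]] : sc_edge s t L (p i).
    by case/and3P: (p_edge i).
  rewrite inE => /eqP Le v_se; subst v; exists e; split=> //.
  by rewrite p_next; apply/imsetP; exists e; rewrite // inE piv Le eqxx.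
- move=> i v; rewrite p_next => /imsetP[e]; rewrite inE => /andP[pie /eqP Le] ->.
  by exists e.
exists x => //; split=> // [|i]; last by case: (Rx i).
by apply/funext => i; case: (Rx i).
Qed.

Lemma sc_lift_exists p : sc_shift s t L p -> exists x, sc_lift p x.
Proof.
move=> sc_p; have /and3P[+ _ _] : sc_edge s t L (p 0) by case: sc_p => /(_ 0)/and3P[].
rewrite inE => /set0Pn[u pu].
by have [x ? _] := sc_lift_through sc_p pu; exists x.
Qed.

Hypothesis rr : right_resolving s L.

Lemma right_resolving_path_agree x x' k n :
  edge_shift s t x -> edge_shift s t x' -> s (x k) = s (x' k) ->
  (forall j : nat, (j <= n)%N -> L (x (k + j%:Z)) = L (x' (k + j%:Z))) ->
  forall j : nat, (j <= n)%N -> x (k + j%:Z) = x' (k + j%:Z).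
Proof.
move=> Ex Ex' src_k lab_x; elim=> [|j IH] le_jn.
  by apply: rr; rewrite addr0 //; have := lab_x 0%N isT; rewrite addr0.
apply: rr; last exact: lab_x.
have -> : k + j.+1%:Z = k + j%:Z + 1 by rewrite intS addrA addrAC.
by rewrite -Ex -Ex' IH // ltnW.
Qed.

Lemma sc_lift_agree p p' x x' (m : nat) : sc_lift p x -> sc_lift p' x' ->
  agree_on m (lab (@sc_lab V A) p) (lab (@sc_lab V A) p') ->
  s (x (- m%:Z)) = s (x' (- m%:Z)) -> agree_on m x x'.
Proof.
move=> lift_x lift_x' p_p' src_m i le_im.
have [Ex _ _] := lift_x; have [Ex' _ _] := lift_x'.
rewrite (_ : i = - m%:Z + (absz (i + m%:Z))%:Z); last by lia.
apply: (right_resolving_path_agree (n := (2 * m)%N)) => //; last by lia.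
move=> j le_j; rewrite (sc_lift_lab _ lift_x) (sc_lift_lab _ lift_x').
by apply: p_p'; lia.
Qed.

Lemma sc_lift_approx p p' x m : sc_shift s t L p' -> agree_on m p p' ->
  sc_lift p x -> exists2 x', sc_lift p' x' & agree_on m x x'.
Proof.
move=> sc_p' p_p' lift_x.
have [|x' lift_x' src_x'] := @sc_lift_through p' (- m%:Z) (s (x (- m%:Z))) sc_p'.
  by rewrite -p_p'; [case: lift_x | lia].
exists x' => //; apply: sc_lift_agree lift_x lift_x' _ (esym src_x').
by move=> i /p_p' pi; rewrite /lab pi.
Qed.

Definition sc_sources (S : (int -> E) -> Prop) (i : int) : {set V} :=
  [set v | `[< exists2 w, S w & s (w i) = v >]].

Definition sc_point (S : (int -> E) -> Prop) (b : int -> A) : int -> {set V} * A :=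
  fun i => (sc_sources S i, b i).

Lemma in_sc_sources S i v :
  reflect (exists2 w, S w & s (w i) = v) (v \in sc_sources S i).
Proof. by rewrite inE; apply: asboolP. Qed.

Section PointOfPaths.
Variables (S : (int -> E) -> Prop) (b : int -> A).
Hypothesis S_paths : forall w, S w -> edge_shift s t w /\ lab L w = b.

Lemma sc_point_lift w : S w -> sc_lift (sc_point S b) w.
Proof.
move=> Sw; have [Ew lab_w] := S_paths Sw.
by split=> // i; apply/in_sc_sources; exists w.
Qed.

Lemma sc_shift_sc_point : (exists w, S w) -> sc_shift s t L (sc_point S b).
Proof.
case=> w0 Sw0.
have b_lab w i : S w -> L (w i) = b i by case/S_paths => _ /(congr1 (fun y => y i)).
have chain i : sc_tgt s t L (sc_point S b i) = sc_src (sc_point S b (i + 1)).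
  apply/setP => v; apply/imsetP/in_sc_sources.
  - case=> e; rewrite inE => /andP[/in_sc_sources[w Sw swe] /eqP Le] ->.
    have [Ew _] := S_paths Sw.
    have -> : e = w i by apply: rr; rewrite ?swe // Le b_lab.
    by exists w.
  - case=> w Sw <-; have [Ew _] := S_paths Sw; exists (w i); last by rewrite Ew.
    rewrite inE b_lab // eqxx andbT.
    by apply/in_sc_sources; exists w.
apply: sc_shift_of_chain (chain) => i; apply/and3P; split.
- by rewrite inE; apply/set0Pn; exists (s (w0 i)); apply/in_sc_sources; exists w0.
- rewrite chain inE; apply/set0Pn; exists (s (w0 (i + 1))).
  by apply/in_sc_sources; exists w0.
- apply/subsetP => v; rewrite /sc_src => /in_sc_sources[w Sw <-].
  apply/imsetP; exists (w i) => //.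
  by rewrite inE b_lab.
Qed.

Lemma sc_point_approx w m :
  sc_lift (sc_point S b) w -> exists2 w', S w' & agree_on m w w'.
Proof.
move=> lift_w; have [_ _ /(_ (- m%:Z))/in_sc_sources[w' Sw' src_w']] := lift_w.
exists w' => //.
exact: sc_lift_agree lift_w (sc_point_lift Sw') (fun _ _ => erefl) (esym src_w').
Qed.

End PointOfPaths.
End SubsetConstruction.

Definition sc_induced (VG EG A VH EH B : finType) (sG tG : EG -> VG) (LG : EG -> A)
    (sH : EH -> VH) (phi : (int -> EG) -> int -> EH) (psi : (int -> A) -> int -> B)
    (p : int -> {set VG} * A) : int -> {set VH} * B :=
  sc_point sH (fun w => exists2 x, sc_lift sG tG LG p x & w = phi x)
    (psi (lab (@sc_lab VG A) p)).

Section InducedMap.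
Variables (A B VG EG VH EH : finType).
Variables (sG tG : EG -> VG) (LG : EG -> A) (sH tH : EH -> VH) (LH : EH -> B).
Variables (Y : (int -> A) -> Prop) (psi : (int -> A) -> int -> B)
  (phi : (int -> EG) -> int -> EH).

Local Notation induced := (sc_induced sG tG LG sH phi psi).

Hypothesis rrG : right_resolving sG LG.
Hypothesis rrH : right_resolving sH LH.
Hypothesis presG : forall x, edge_shift sG tG x -> Y (lab LG x).
Hypothesis psi_shift : forall y, Y y -> psi (shift y) = shift (psi y).
Hypothesis psi_cont : cont_on Y psi.
Hypothesis phi_map : forall x, edge_shift sG tG x -> edge_shift sH tH (phi x).
Hypothesis phi_shift : forall x, edge_shift sG tG x -> phi (shift x) = shift (phi x).
Hypothesis phi_cont : cont_on (edge_shift sG tG) phi.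
Hypothesis compat : forall x, edge_shift sG tG x -> lab LH (phi x) = psi (lab LG x).

Lemma sc_lift_presented p x : sc_lift sG tG LG p x -> Y (lab (@sc_lab VG A) p).
Proof. by case=> Ex <- _; apply: presG. Qed.

Lemma sc_induced_paths p w : (exists2 x, sc_lift sG tG LG p x & w = phi x) ->
  edge_shift sH tH w /\ lab LH w = psi (lab (@sc_lab VG A) p).
Proof.
by case=> x [Ex lab_x _] ->; split; [apply: phi_map | rewrite compat ?lab_x].
Qed.

Lemma sc_shift_sc_induced p :
  sc_shift sG tG LG p -> sc_shift sH tH LH (induced p).
Proof.
move=> sc_p; apply: (sc_shift_sc_point rrH (@sc_induced_paths p)).
by have [x lift_x] := sc_lift_exists sc_p; exists (phi x); exists x.
Qed.

Lemma sc_induced_shift p :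
  sc_shift sG tG LG p -> induced (shift p) = shift (induced p).
Proof.
move=> sc_p; have [x0 lift_x0] := sc_lift_exists sc_p.
apply/funext => j; congr pair; last first.
  change (psi (shift (lab (@sc_lab VG A) p)) j = psi (lab (@sc_lab VG A) p) (j + 1)).
  by rewrite psi_shift //; apply: sc_lift_presented lift_x0.
change ((induced (shift p) j).1 = (induced p (j + 1)).1).
apply/setP => v; apply/in_sc_sources/in_sc_sources.
- case=> _ [x lift_x ->] <-; set x' := fun i => x (i - 1).
  have lift_x' : sc_lift sG tG LG p x' := sc_lift_unshift lift_x.
  have [Ex' _ _] := lift_x'.
  have -> : x = shift x' by apply/funext => i; rewrite /shift /x' addrK.
  by exists (phi x'); [exists x' | rewrite phi_shift].
- case=> _ [x lift_x ->] <-; exists (phi (shift x)).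
    by exists (shift x) => //; apply: sc_lift_transl.
  by have [Ex _ _] := lift_x; rewrite phi_shift.
Qed.

Lemma sc_induced_cont : cont_on (sc_shift sG tG LG) induced.
Proof.
move=> p sc_p n.
have [m1 phi_unif] := edge_shift_uniform_cont phi_cont n.
have [x0 lift_x0] := sc_lift_exists sc_p.
have [m2 psi_m2] := psi_cont (sc_lift_presented lift_x0) n.
have sub q q' j : sc_shift sG tG LG q' -> agree_on m1 q q' -> (absz j <= n)%N ->
    (induced q j).1 \subset (induced q' j).1.
  move=> sc_q' q_q' le_jn; apply/subsetP => _ /in_sc_sources[_ [x lift_x ->] <-].
  have [x' lift_x' x_x'] := sc_lift_approx rrG sc_q' q_q' lift_x.
  apply/in_sc_sources; exists (phi x'); first by exists x'.
  have [[Ex _ _] [Ex' _ _]] := (lift_x, lift_x').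
  by rewrite (phi_unif x x' Ex Ex' x_x' j le_jn).
exists (maxn m1 m2) => p' sc_p' p_p' j le_jn.
have [x1 lift_x1] := sc_lift_exists sc_p'.
congr pair.
- have p_p'1 := agree_onW (leq_maxl m1 m2) p_p'.
  by apply/eqP; rewrite eqEsubset !sub //; apply: agree_onC.
- apply: psi_m2 => //; first exact: sc_lift_presented lift_x1.
  by move=> i le_i; rewrite /lab (agree_onW (leq_maxr m1 m2) p_p').
Qed.

Variables (g : (int -> EH) -> int -> EG) (h : (int -> B) -> int -> A).
Hypothesis g_phi : forall x, edge_shift sG tG x -> g (phi x) = x.
Hypothesis g_cont : cont_on (edge_shift sH tH) g.
Hypothesis h_psi : forall y, Y y -> h (psi y) = y.

Lemma sc_induced_inv p :
  sc_shift sG tG LG p -> sc_induced sH tH LH sG g h (induced p) = p.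
Proof.
move=> sc_p; have [x0 lift_x0] := sc_lift_exists sc_p.
apply/funext => j; rewrite [p j]surjective_pairing; congr pair; last first.
  change (h (psi (lab (@sc_lab VG A) p)) j = (p j).2).
  by rewrite h_psi //; apply: sc_lift_presented lift_x0.
apply/setP => u; apply/in_sc_sources/idP.
- case=> _ [w lift_w ->] <-; have [Ew _ _] := lift_w.
  have [m g_m] := g_cont Ew (absz j).
  have [_ [x lift_x ->] w_phix] := sc_point_approx rrH (@sc_induced_paths p) m lift_w.
  have [Ex _ src_x] := lift_x.
  by rewrite (g_m _ (phi_map Ex) w_phix j (leqnn _)) g_phi //; apply: src_x.
- move=> pju; have [x lift_x <-] := sc_lift_through sc_p pju.
  have [Ex _ _] := lift_x.
  exists x => //; exists (phi x); last by rewrite g_phi.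
  by apply: (sc_point_lift (@sc_induced_paths p)); exists x.
Qed.

End InducedMap.

Theorem corollary4p3 (A B : finType)
  (VG EG : finType) (sG tG : EG -> VG) (LG : EG -> A)
  (VH EH : finType) (sH tH : EH -> VH) (LH : EH -> B)
  (Y : (int -> A) -> Prop) (Z : (int -> B) -> Prop)
  (psi : (int -> A) -> (int -> B)) (phi : (int -> EG) -> (int -> EH)) :
  no_sinks_sources sG tG -> no_sinks_sources sH tH ->
  right_resolving sG LG -> right_resolving sH LH ->
  presents sG tG LG Y -> presents sH tH LH Z ->
  conjugacy Y Z psi ->
  conjugacy (edge_shift sG tG) (edge_shift sH tH) phi ->
  (forall x, edge_shift sG tG x -> lab LH (phi x) = psi (lab LG x)) ->
  exists phi'' : (int -> {set VG} * A) -> (int -> {set VH} * B),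
    conjugacy (sc_shift sG tG LG) (sc_shift sH tH LH) phi'' /\
    (forall x, sc_shift sG tG LG x ->
       lab (@sc_lab VH B) (phi'' x) = psi (lab (@sc_lab VG A) x)).
Proof.
move=> _ _ rrG rrH presY presZ
  [_ psi_shift psi_cont [h [_ h_psi psi_h h_cont]]]
  [phi_map phi_shift phi_cont [g [g_map g_phi phi_g g_cont]]] compat.
have presG x : edge_shift sG tG x -> Y (lab LG x) by move=> Ex; apply/presY; exists x.
have presH w : edge_shift sH tH w -> Z (lab LH w) by move=> Ew; apply/presZ; exists w.
have compat' w : edge_shift sH tH w -> lab LG (g w) = h (lab LH w).
  move=> Ew; have Egw := g_map w Ew.
  by rewrite -[in RHS](phi_g w Ew) compat // h_psi //; apply: presG.
exists (sc_induced sG tG LG sH phi psi); split=> //; split.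
- exact: sc_shift_sc_induced rrH phi_map compat.
- by move=> p /(sc_induced_shift sH presG psi_shift phi_shift).
- exact: (sc_induced_cont sH rrG presG psi_cont phi_cont).
exists (sc_induced sH tH LH sG g h); split.
- exact: sc_shift_sc_induced rrG g_map compat'.
- by move=> p /(sc_induced_inv rrH presG phi_map compat g_phi g_cont h_psi).
- by move=> q /(sc_induced_inv rrG presH g_map compat' phi_g phi_cont psi_h).
- exact: (sc_induced_cont sG rrH presH h_cont g_cont).
Qed.
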